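(* Let $n\ge1$, let $A_0,A_1\subseteq 2^{<\omega}$, let $C$ be $n$-fair for $A_0,A_1$, and let $B_0\cup B_1=\omega$ be a partition. Assume there is no infinite set $H$ with ($H\subseteq B_0$ or $H\subseteq B_1$) such that $H\oplus C$ is $n$-fair for $A_0,A_1$. Then for every condition $(F,X)$, every $i<2$, and every $p\in\omega$, there is an extension $(E,Y)$ of $(F,X)$ such that $E\cap B_i\cap(p,+\infty)\neq\emptyset$.
   Context: Conditions. A condition is a Mathias condition $(F,X)$ ($F$ finite, $X$ infinite, $\max F<\min X$) such that $X\oplus C$ is $n$-fair for $A_0,A_1$. A condition $(E,Y)$ extends $(F,X)$ if $F\subseteq E$, $Y\subseteq X$, and $E\setminus F\subseteq X$. Strings are finite binary strings, and $\preceq$ is the prefix relation. Two strings are incomparable if neither is a prefix of the other. Matrices. An $m$-by-$n$ matrix $M$ is an array of strings $\sigma_{i,j}$ ($i<m$, $j<n$), with rows $M(i)=(\sigma_{i,0},\dots,\sigma_{i,n-1})$. It is disjoint if each row consists of pairwise incomparable strings. Formulas. An $m$-by-$n$ formula is a formula with distinguished finite-set variables $U_{i,j}$. It is $\Sigma^{0,X}_1$ if it is $\Sigma^0_1$ relative to $X$. Valuations. An $M$-valuation is a tuple $V=(B_{i,j})$ of finite sets $B_{i,j}\subseteq\{\tau:\tau\succeq\sigma_{i,j}\}$. We write $\varphi(V)$ for $\varphi$ evaluated at $U_{i,j}:=B_{i,j}$, and $V(i)=(B_{i,0},\dots,B_{i,n-1})$. We write $V>s$ if all strings occurring in $V$ have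 length $>s$. Essential. $\varphi$ is essential in $M$ if for every $s$ there is an $M$-valuation $V>s$ with $\varphi(V)$. Diagonalization. An $M$-valuation $V$ diagonalizes against $A_0,A_1$ if for every $i<m$ there are components $L,R$ of $V(i)$ with $L\subseteq A_0$ and $R\subseteq A_1$. Fairness. For $n\ge1$, a set $X$ is $n$-fair for $A_0,A_1$ if the following holds: for every $m$, every $\Sigma^{0,X}_1$ $m$-by-$2^nm$ formula $\varphi$, and every $m$-by-$2^nm$ disjoint matrix $M$ in which $\varphi$ is essential, there is an $M$-valuation $V$ diagonalizing against $A_0,A_1$ with $\varphi(V)$. *)

From mathcomp Require Import all_boot.
Set Implicit Arguments. Unset Strict Implicit. Unset Printing Implicit Defensive.

Definition natset := nat -> bool.
Definition incomparable (s t : bitseq) : bool := ~~ prefix s t && ~~ prefix t s.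

Definition infinite_set (H : natset) : Prop := forall k, exists h, k < h /\ H h.

Definition join (X C : natset) : natset :=
  fun k => if odd k then C k./2 else X k./2.

Inductive code : Type :=
| cZero | cSucc | cProj (i : nat) | cOracle
| cComp (f : code) (gs : list code)
| cRec (b s : code)
| cMu (f : code).

Inductive eval (O : natset) : code -> seq nat -> nat -> Prop :=
| evZero args : eval O cZero args 0
| evSucc x args : eval O cSucc (x :: args) x.+1
| evProj i args : i < size args -> eval O (cProj i) args (nth 0 args i)
| evOracle x args : eval O cOracle (x :: args) (nat_of_bool (O x))
| evComp f gs args ys y :
    evals O gs args ys -> eval O f ys y -> eval O (cComp f gs) args y
| evRec0 b s args y : eval O b args y -> eval O (cRec b s) (0 :: args) y
| evRecS b s x args z y :
    eval O (cRec b s) (x :: args) z -> eval O s (x :: z :: args) y ->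
    eval O (cRec b s) (x.+1 :: args) y
| evMu f args y :
    eval O f (y :: args) 0 ->
    (forall z, z < y -> exists v, eval O f (z :: args) v.+1) ->
    eval O (cMu f) args y
with evals (O : natset) : seq code -> seq nat -> seq nat -> Prop :=
| evsNil args : evals O [::] args [::]
| evsCons g gs args y ys :
    eval O g args y -> evals O gs args ys -> evals O (g :: gs) args (y :: ys).

(* The e-th Sigma^{0,O}_1 predicate on naturals: the program e with oracle O
   halts on input k. *)
Definition halts (O : natset) (e : code) (k : nat) : Prop :=
  exists y, eval O e [:: k] y.

Definition matrix_s (m k : nat) := 'I_m -> 'I_k -> bitseq.
(* An M-valuation candidate: each entry a finite set of strings, given as a list *)
Definition valuation (m k : nat) := 'I_m -> 'I_k -> seq bitseq.

Definition disjoint_matrix m k (M : matrix_s m k) : Prop :=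
  forall (i : 'I_m) (j j' : 'I_k), j != j' -> incomparable (M i j) (M i j').

Definition is_valuation m k (M : matrix_s m k) (V : valuation m k) : Prop :=
  forall i j tau, tau \in V i j -> prefix (M i j) tau.

Definition val_gt m k (V : valuation m k) (s : nat) : Prop :=
  forall i j tau, tau \in V i j -> s < size tau.

Definition code_val m k (V : valuation m k) : nat :=
  pickle [seq [seq V i j | j <- enum 'I_k] | i <- enum 'I_m].

(* The Sigma^{0,O}_1 m-by-k formula with index e, evaluated at V. *)
Definition sat (O : natset) (e : code) m k (V : valuation m k) : Prop :=
  halts O e (code_val V).

Definition essential (O : natset) (e : code) m k (M : matrix_s m k) : Prop :=
  forall s, exists V : valuation m k, [/\ is_valuation M V, val_gt V s & sat O e V].

Definition diagonalizes (A0 A1 : bitseq -> Prop) m k (V : valuation m k) : Prop :=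
  forall i : 'I_m, exists L R : 'I_k,
    (forall tau, tau \in V i L -> A0 tau) /\ (forall tau, tau \in V i R -> A1 tau).

Definition fair (n : nat) (A0 A1 : bitseq -> Prop) (X : natset) : Prop :=
  forall (m : nat) (e : code) (M : matrix_s m (2 ^ n * m)),
    disjoint_matrix M -> essential X e M ->
    exists V : valuation m (2 ^ n * m),
      [/\ is_valuation M V, diagonalizes A0 A1 V & sat X e V].

Definition condition (n : nat) (A0 A1 : bitseq -> Prop) (C : natset)
    (F : seq nat) (X : natset) : Prop :=
  [/\ infinite_set X,
      (forall f x, f \in F -> X x -> f < x)
    & fair n A0 A1 (join X C)].

Definition extends (n : nat) (A0 A1 : bitseq -> Prop) (C : natset)
    (E : seq nat) (Y : natset) (F : seq nat) (X : natset) : Prop :=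
  [/\ condition n A0 A1 C E Y,
      {subset F <= E},
      (forall y, Y y -> X y)
    & (forall x, x \in E -> x \notin F -> X x)].

(* If (F, X) admits no element of B_i above p, then X ∩ (p, ∞) lies inside
   B_(1-i); and X ∩ (p, ∞) ⊕ C differs from X ⊕ C only on finitely many
   arguments, so it is computable from X ⊕ C and hence still n-fair.  That
   would be an infinite homogeneous H with H ⊕ C fair, which is excluded.
   Otherwise some x ∈ X ∩ B_i exceeds p, and (x :: F, X ∩ (x, ∞)) is the
   required extension, fair for the same reason. *)

From mathcomp Require Import all_boot.
From mathcomp Require Import zify.
From Stdlib Require Import Classical.

Definition code_ind_nested (P : code -> Prop) (H0 : P cZero) (H1 : P cSucc)
  (H2 : forall i, P (cProj i)) (H3 : P cOracle)
  (H4 : forall f gs, P f -> foldr (fun g acc => P g /\ acc) True gs -> P (cComp f gs))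
  (H5 : forall b s, P b -> P s -> P (cRec b s))
  (H6 : forall f, P f -> P (cMu f)) : forall c, P c :=
  fix F (c : code) : P c := match c with
  | cZero => H0 | cSucc => H1 | cProj i => H2 i | cOracle => H3
  | cComp f gs => H4 f gs (F f)
      ((fix G (gs : seq code) : foldr (fun g acc => P g /\ acc) True gs :=
         match gs return foldr (fun g acc => P g /\ acc) True gs with
         | [::] => I | g :: gs' => conj (F g) (G gs') end) gs)
  | cRec b s => H5 b s (F b) (F s)
  | cMu f => H6 f (F f) end.

Lemma eval_functional O c args y1 y2 :
  eval O c args y1 -> eval O c args y2 -> y1 = y2.
Proof.
elim/code_ind_nested: c args y1 y2.
- by move=> args y1 y2 H1 H2; inversion H1; inversion H2.
- by move=> args y1 y2 H1 H2; inversion H1; subst; inversion H2.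
- by move=> i args y1 y2 H1 H2; inversion H1; subst; inversion H2.
- by move=> args y1 y2 H1 H2; inversion H1; subst; inversion H2.
- move=> f gs IHf IHgs args y1 y2 H1 H2; inversion H1; subst; inversion H2; subst.
  have ys_eq : ys = ys0.
    clear -IHgs H3 H4; elim: gs IHgs args ys ys0 H3 H4 => [|g gs IH].
      by move=> _ args ys1 ys2 E1 E2; inversion E1; inversion E2.
    move=> [Hg Hgs] args ys1 ys2 E1 E2; inversion E1; subst; inversion E2; subst.
    by rewrite (Hg _ _ _ H1 H2) (IH Hgs _ _ _ H4 H6).
  by subst; apply: IHf H6 H8.
- move=> b s IHb IHs [|x a] y1 y2 H1; first by inversion H1.
  elim: x y1 y2 H1 => [|x IH] y1 y2 H1 H2.
    by inversion H1; subst; inversion H2; subst; apply: IHb H5 H6.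
  inversion H1; subst; inversion H2; subst.
  by have z_eq := IH _ _ H6 H8; subst; apply: IHs H7 H9.
- move=> f IHf args y1 y2 H1 H2; inversion H1; subst; inversion H2; subst.
  case: (ltngtP y1 y2) => // lt_y.
  + by have [v Hv] := H5 _ lt_y; have := IHf _ _ _ H0 Hv.
  + by have [v Hv] := H3 _ lt_y; have := IHf _ _ _ H4 Hv.
Qed.

Definition computes_oracle (O : natset) (G : code) (O' : natset) : Prop :=
  forall args y, eval O G args y <-> exists x a, args = x :: a /\ y = O' x.

Section OracleSubstitution.
Variables (O O' : natset) (G : code).
Hypothesis G_computes : computes_oracle O G O'.

Fixpoint subst_oracle (c : code) : code :=
  match c with
  | cOracle => G
  | cComp f gs => cComp (subst_oracle f) (map subst_oracle gs)
  | cRec b s => cRec (subst_oracle b) (subst_oracle s)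
  | cMu f => cMu (subst_oracle f)
  | c => c
  end.

Lemma eval_subst_oracle c args y :
  eval O' c args y <-> eval O (subst_oracle c) args y.
Proof.
elim/code_ind_nested: c args y => /=.
- by move=> args y; split=> H; inversion H; constructor.
- by move=> args y; split=> H; inversion H; constructor.
- by move=> i args y; split=> H; inversion H; constructor.
- move=> args y; rewrite G_computes; split; first by move=> H; inversion H; eauto.
  by case=> x [a [-> ->]]; constructor.
- move=> f gs IHf IHgs args y.
  have IHevals ys : evals O' gs args ys <-> evals O (map subst_oracle gs) args ys.
    elim: gs IHgs {IHf} ys => [|g gs IH] /=.
      by move=> _ ys; split=> H; inversion H; constructor.
    case=> Hg Hgs ys; split=> H; inversion H; subst; constructor.
    + by apply/Hg.
    + by apply/IH.
    + by apply/Hg.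
    + by apply/IH.
  split=> H; inversion H; subst; econstructor.
  + by apply/IHevals; eassumption.
  + by apply/IHf; eassumption.
  + by apply/IHevals; eassumption.
  + by apply/IHf; eassumption.
- move=> b s IHb IHs [|x a] y; first by split=> H; inversion H.
  elim: x y => [|x IH] y.
    by split=> H; inversion H; subst; constructor; apply/IHb.
  split=> H; inversion H; subst; econstructor.
  + by apply/IH; eassumption.
  + by apply/IHs; eassumption.
  + by apply/IH; eassumption.
  + by apply/IHs; eassumption.
- move=> f IHf args y; split=> H; inversion H as [| | | | | | | ? ? ? Hy Hlt]; subst.
  + constructor; first by apply/IHf.
    by move=> z /Hlt[v Hv]; exists v; apply/IHf.
  + constructor; first by apply/IHf.
    by move=> z /Hlt[v Hv]; exists v; apply/IHf.
Qed.

Lemma sat_subst_oracle e m k (V : valuation m k) :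
  sat O' e V <-> sat O (subst_oracle e) V.
Proof. by split=> -[y Hy]; exists y; apply/eval_subst_oracle. Qed.

End OracleSubstitution.

Lemma fair_computes_oracle n A0 A1 O O' G :
  computes_oracle O G O' -> fair n A0 A1 O -> fair n A0 A1 O'.
Proof.
move=> G_computes O_fair m e M M_disj e_ess.
have ess_subst : essential O (subst_oracle G e) M.
  move=> s; have [V [V_val V_gt V_sat]] := e_ess s.
  by exists V; split=> //; exact/(sat_subst_oracle _ _ _ G_computes).
have [V [V_val V_diag V_sat]] := O_fair m _ M M_disj ess_subst.
by exists V; split=> //; apply/(sat_subst_oracle _ _ _ G_computes).
Qed.

Section ArithmeticCodes.
Variable O : natset.

Fixpoint cConst (k : nat) : code :=
  if k is k'.+1 then cComp cSucc [:: cConst k'] else cZero.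
Definition cPred : code := cRec cZero (cProj 0).
(* On arguments [v; u] it returns the truncated difference [u - v]. *)
Definition cMonus : code := cRec (cProj 0) (cComp cPred [:: cProj 1]).
Definition cSub (g h : code) : code := cComp cMonus [:: h; g].
Definition cEq (a : nat) : code :=
  cSub (cSub (cConst 1) (cSub (cProj 0) (cConst a))) (cSub (cConst a) (cProj 0)).
Definition cOracle_off (D : seq nat) : code :=
  foldr (fun a g => cSub g (cEq a)) cOracle D.

Lemma eval_proj0 x a : eval O (cProj 0) (x :: a) x.
Proof. exact: (@evProj O 0 (x :: a) isT). Qed.

Lemma eval_proj1 x y a : eval O (cProj 1) (x :: y :: a) y.
Proof. exact: (@evProj O 1 (x :: y :: a) isT). Qed.

Lemma eval_cConst k args : eval O (cConst k) args k.
Proof.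
elim: k => [|k IH] /=; first exact: evZero.
apply: (evComp (ys := [:: k])); last exact: evSucc.
by constructor; [exact: IH | constructor].
Qed.

Lemma eval_cPred v : eval O cPred [:: v] v.-1.
Proof.
elim: v => [|v IH]; first by do 2 constructor.
by apply: (evRecS (z := v.-1)); [exact: IH | exact: eval_proj0].
Qed.

Lemma eval_cMonus u v : eval O cMonus [:: v; u] (u - v).
Proof.
elim: v => [|v IH]; first by rewrite subn0; constructor; apply: eval_proj0.
apply: (evRecS (z := u - v)); first exact: IH.
apply: (evComp (ys := [:: u - v])); last by rewrite subnS; apply: eval_cPred.
by constructor; [apply: eval_proj1 | constructor].
Qed.

Lemma eval_cSub g h args a b :
  eval O g args a -> eval O h args b -> eval O (cSub g h) args (a - b).
Proof.
move=> Hg Hh; apply: (evComp (ys := [:: b; a])); last exact: eval_cMonus.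
by constructor; [exact: Hh | constructor; [exact: Hg | constructor]].
Qed.

Lemma eval_cEq a x args : eval O (cEq a) (x :: args) (x == a).
Proof.
have -> : nat_of_bool (x == a) = (1 - (x - a)) - (a - x).
  by case: (ltngtP x a) => h; lia.
by repeat apply: eval_cSub; (apply: eval_cConst || apply: eval_proj0).
Qed.

Lemma eval_cOracle_off D x args :
  eval O (cOracle_off D) (x :: args) (O x && (x \notin D)).
Proof.
elim: D => [|a D IH] /=; first by rewrite andbT; constructor.
have -> : nat_of_bool (O x && (x \notin a :: D)) = (O x && (x \notin D)) - (x == a).
  by rewrite in_cons; case: (O x); case: (x == a); case: (x \in D).
by apply: eval_cSub; [exact: IH | exact: eval_cEq].
Qed.

Lemma eval_cOracle_off_nil D y : ~ eval O (cOracle_off D) [::] y.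
Proof.
elim: D y => [|a D IH] y /= H; first by inversion H.
inversion H as [| | | | ? ? ? ys ? Hs | | |]; subst.
inversion Hs as [|? ? ? ? ? ? Hs']; subst.
inversion Hs' as [|? ? ? ? ? Hg]; subst.
exact: IH Hg.
Qed.

Lemma computes_oracle_off D (O' : natset) :
  (forall x, O' x = O x && (x \notin D)) -> computes_oracle O (cOracle_off D) O'.
Proof.
move=> O'E args y; split.
  case: args => [|x a] H; first by case/eval_cOracle_off_nil: H.
  by exists x, a; split=> //; rewrite O'E; apply: eval_functional H (eval_cOracle_off _ _ _).
by case=> x [a [-> ->]]; rewrite O'E; exact: eval_cOracle_off.
Qed.

End ArithmeticCodes.

Lemma fair_oracle_off n A0 A1 (O O' : natset) (D : seq nat) :
  (forall x, O' x = O x && (x \notin D)) -> fair n A0 A1 O -> fair n A0 A1 O'.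
Proof. by move=> /computes_oracle_off; apply: fair_computes_oracle. Qed.

Definition restrict_above (X : natset) (q : nat) : natset := fun k => X k && (q < k).

Lemma infinite_restrict_above X q :
  infinite_set X -> infinite_set (restrict_above X q).
Proof.
move=> X_inf k; have [h [lt_h Xh]] := X_inf (maxn k q).
by exists h; rewrite /restrict_above Xh /=; split; lia.
Qed.

(* In [join Y C] the argument [2k] carries [Y k]; cutting [Y] below [q]
   switches off exactly the arguments [2k] with [k <= q]. *)
Lemma fair_join_restrict_above n A0 A1 X C q :
  fair n A0 A1 (join X C) -> fair n A0 A1 (join (restrict_above X q) C).
Proof.
apply: (@fair_oracle_off _ _ _ _ _ [seq k.*2 | k <- iota 0 q.+1]) => x.
have evens_le_q : (x \in [seq k.*2 | k <- iota 0 q.+1]) = ~~ odd x && (x./2 <= q).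
  apply/mapP/andP => [[k] | [x_even x_le]].
    by rewrite mem_iota add0n => /andP[_ k_le] ->; rewrite odd_double doubleK.
  by exists x./2; rewrite ?mem_iota ?add0n // halfK (negbTE x_even) subn0.
rewrite evens_le_q /join /restrict_above; case: (odd x) => /=; first by rewrite andbT.
by rewrite -ltnNge.
Qed.

Lemma extends_add n A0 A1 C F X x :
  condition n A0 A1 C F X -> X x ->
  extends n A0 A1 C (x :: F) (restrict_above X x) F X.
Proof.
case=> X_inf F_below X_fair Xx; split.
- split; first exact: infinite_restrict_above.
  + move=> f y; rewrite in_cons => /orP[/eqP -> | f_in] /andP[Xy lt_xy] //.
    exact: F_below.
  + exact: fair_join_restrict_above.
- by move=> y y_in; rewrite in_cons y_in orbT.
- by move=> y /andP[].
- by move=> y; rewrite in_cons => /orP[/eqP -> | ->].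
Qed.

Theorem mainTheorem12 (n : nat) (A0 A1 : bitseq -> Prop) (C B0 B1 : natset) :
  1 <= n ->
  fair n A0 A1 C ->
  (forall x, B0 x || B1 x) ->
  (forall x, ~~ (B0 x && B1 x)) ->
  ~ (exists H : natset,
       [/\ infinite_set H,
           (forall x, H x -> B0 x) \/ (forall x, H x -> B1 x)
         & fair n A0 A1 (join H C)]) ->
  forall (F : seq nat) (X : natset), condition n A0 A1 C F X ->
  forall (i : nat), i < 2 -> forall p : nat,
  exists (E : seq nat) (Y : natset),
    extends n A0 A1 C E Y F X /\
    exists x, [/\ x \in E, (if i == 0 then B0 x else B1 x) & p < x].
Proof.
move=> _ _ B_cover _ no_homogeneous F X FX i lt_i2 p.
have [[x [Xx Bx lt_px]] | no_Bi] :=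
  classic (exists x, [/\ X x, (if i == 0 then B0 x else B1 x) & p < x]).
  exists (x :: F), (restrict_above X x); split; first exact: extends_add.
  by exists x; rewrite in_cons eqxx.
case: no_homogeneous; exists (restrict_above X p).
have [X_inf _ X_fair] := FX.
split; [exact: infinite_restrict_above | | exact: fair_join_restrict_above].
have not_Bi x : restrict_above X p x -> ~ (if i == 0 then B0 x else B1 x).
  by move=> /andP[Xx lt_px] Bx; apply: no_Bi; exists x.
clear no_Bi; case: i lt_i2 not_Bi => [|[|//]] _ not_Bi /=.
  by right=> x /not_Bi; have := B_cover x; case: (B0 x).
by left=> x /not_Bi; have := B_cover x; case: (B1 x); rewrite ?orbF.
Qed.
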